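(* Let $\mathcal{S}$ be a state space, $\mathcal{A}$ a finite action space, $\pi_{\mathrm{ref}}$ a full-support policy, $\beta>0$, $R>0$, $r^*:\mathcal{S}\times\mathcal{A}\to[0,R]$, and let $\Pi$ be a finite policy class satisfying (I) $\pi^*_{r^*}\in\Pi$ and (II) $|\log(\pi(a|s)/\pi_{\mathrm{ref}}(a|s))|\le R/\beta$ for all $\pi\in\Pi$ and all $(s,a)$. Then $\mathrm{conv}(\Pi)$ also satisfies (I) and (II).
   Context: $\pi^*_{r^*}(a|s)\propto\pi_{\mathrm{ref}}(a|s)e^{r^*(s,a)/\beta}$. $\mathrm{conv}(\Pi)$ is the set of all policies $\sum_{i=1}^n\lambda^i\pi^i$ (pointwise in $(a|s)$) with $n\ge1$, $\lambda^i\ge0$, $\sum_i\lambda^i=1$, $\pi^i\in\Pi$. *)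

From HB Require Import structures.
From mathcomp Require Import all_boot all_order all_algebra.
From mathcomp Require Import classical_sets cardinality reals sequences.
From mathcomp.analysis Require Import exp.
Set Implicit Arguments. Unset Strict Implicit. Unset Printing Implicit Defensive.
Import Order.TTheory GRing.Theory Num.Theory.
Local Open Scope ring_scope.
Local Open Scope classical_set_scope.

(* A (stochastic) policy pi(a|s) is represented as pi s a. *)
Definition is_policy (R : realType) (S : Type) (A : finType)
  (pi : S -> A -> R) : Prop :=
  forall s, (forall a, 0 <= pi s a) /\ \sum_(a : A) pi s a = 1.

Definition full_support (R : realType) (S : Type) (A : finType)
  (pi : S -> A -> R) : Prop := forall s a, 0 < pi s a.

Definition pistar (R : realType) (S : Type) (A : finType)
  (piref : S -> A -> R) (beta : R) (r : S -> A -> R) : S -> A -> R :=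
  fun s a => piref s a * expR (r s a / beta) /
             \sum_(b : A) piref s b * expR (r s b / beta).

Definition conv (R : realType) (S : Type) (A : finType)
  (Pi : set (S -> A -> R)) : set (S -> A -> R) :=
  [set p | exists (n : nat) (lam : 'I_n -> R) (pis : 'I_n -> S -> A -> R),
     [/\ (0 < n)%N, (forall i, 0 <= lam i), \sum_(i < n) lam i = 1,
         (forall i, Pi (pis i)) &
         p = fun s a => \sum_(i < n) lam i * pis i s a]].

Definition condI (R : realType) (S : Type) (A : finType)
  (piref : S -> A -> R) (beta : R) (rstar : S -> A -> R)
  (Pi : set (S -> A -> R)) : Prop :=
  Pi (pistar piref beta rstar).

(* Condition (II); the log ratio being defined requires pi(a|s) > 0 *)
Definition condII (R : realType) (S : Type) (A : finType)
  (piref : S -> A -> R) (beta Rb : R) (Pi : set (S -> A -> R)) : Prop :=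
  forall pi, Pi pi -> forall s a,
    0 < pi s a /\ `| ln (pi s a / piref s a) | <= Rb / beta.

From HB Require Import structures.
From mathcomp Require Import all_boot all_order all_algebra.
From mathcomp Require Import classical_sets cardinality reals sequences.
From mathcomp.analysis Require Import exp.
From mathcomp Require Import boolp.
Import Order.TTheory GRing.Theory Num.Theory.
Local Open Scope ring_scope.
Local Open Scope classical_set_scope.

(* Condition (II) says exactly that pi(a|s) lies in the interval
   [pi_ref(a|s) e^{-R/beta}, pi_ref(a|s) e^{R/beta}].  Intervals are convex, so
   every mixture of policies of Pi lies in it as well; condition (I) is
   inherited because Pi is contained in conv(Pi). *)

Lemma convex_comb_itv {R : numDomainType} {n : nat} {lam f : 'I_n -> R}
    {lo hi : R} :
  (forall i, 0 <= lam i) -> \sum_(i < n) lam i = 1 ->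
  (forall i, lo <= f i <= hi) ->
  lo <= \sum_(i < n) lam i * f i <= hi.
Proof.
move=> lam_ge0 lam_sum1 f_itv.
rewrite -[lo]mul1r -[hi]mul1r -lam_sum1 !mulr_suml.
apply/andP; split; apply: ler_sum => i _; rewrite ler_wpM2l //;
  by case/andP: (f_itv i).
Qed.

Lemma normr_ln_le (R : realType) (x c : R) : 0 < x ->
  (`|ln x| <= c) = (expR (- c) <= x <= expR c).
Proof.
move=> x_gt0; have x_pos : x \is Num.pos by rewrite posrE.
by rewrite ler_norml -[in RHS](lnK x_pos) !ler_expR.
Qed.

Lemma normr_ln_ratio_le (R : realType) (x y c : R) : 0 < x -> 0 < y ->
  (`|ln (x / y)| <= c) = (y * expR (- c) <= x <= y * expR c).
Proof.
move=> x_gt0 y_gt0.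
by rewrite normr_ln_le ?divr_gt0 // ler_pdivlMr // ler_pdivrMr // ![_ * y]mulrC.
Qed.

Section ConvexHull.
Variables (R : realType) (S : Type) (A : finType).
Implicit Types (Pi : set (S -> A -> R)) (pi : S -> A -> R).

Lemma sub_conv Pi : Pi `<=` conv Pi.
Proof.
move=> pi Pi_pi; exists 1%N, (fun=> 1), (fun=> pi); split => //.
  by rewrite big_ord1.
by apply/funext => s; apply/funext => a; rewrite big_ord1 mul1r.
Qed.

Lemma condI_conv (piref : S -> A -> R) (beta : R) (rstar : S -> A -> R) Pi :
  condI piref beta rstar Pi -> condI piref beta rstar (conv Pi).
Proof. exact: sub_conv. Qed.

Lemma condII_conv (piref : S -> A -> R) (beta Rb : R) Pi :
  full_support piref ->
  condII piref beta Rb Pi -> condII piref beta Rb (conv Pi).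
Proof.
move=> piref_gt0 hII _ [n [lam [pis [_ lam_ge0 lam_sum1 Pi_pis ->]]]] s a.
have ref_gt0 := piref_gt0 s a.
have pis_itv i :
    piref s a * expR (- (Rb / beta)) <= pis i s a <= piref s a * expR (Rb / beta).
  have [pis_gt0 pis_bound] := hII _ (Pi_pis i) s a.
  by rewrite -normr_ln_ratio_le.
have /andP[mix_ge_lo mix_le_hi] := convex_comb_itv lam_ge0 lam_sum1 pis_itv.
have mix_gt0 : 0 < \sum_(i < n) lam i * pis i s a.
  by apply: lt_le_trans mix_ge_lo; rewrite mulr_gt0 ?expR_gt0.
by split; rewrite // normr_ln_ratio_le // mix_ge_lo mix_le_hi.
Qed.

End ConvexHull.

Theorem lemmaH1 (R : realType) (S : Type) (A : finType)
  (piref : S -> A -> R) (beta Rb : R) (rstar : S -> A -> R)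
  (Pi : set (S -> A -> R)) :
  is_policy piref -> full_support piref ->
  0 < beta -> 0 < Rb ->
  (forall s a, 0 <= rstar s a <= Rb) ->
  finite_set Pi ->
  (forall pi, Pi pi -> is_policy pi) ->
  condI piref beta rstar Pi ->
  condII piref beta Rb Pi ->
  condI piref beta rstar (conv Pi) /\ condII piref beta Rb (conv Pi).
Proof.
move=> _ piref_gt0 _ _ _ _ _ hI hII.
by split; [exact: condI_conv | exact: condII_conv].
Qed.
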